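(* Let $A\in\mathbb{R}^{m\times n}$ with $m\le n$, let $\lambda>0$, and let $D=\begin{bmatrix}A&\sqrt{\lambda}I_m\end{bmatrix}$ have economy SVD $D=U_D\Sigma_D\begin{bmatrix}V_1^T&V_2^T\end{bmatrix}$, where $V_1\in\mathbb{R}^{n\times m}$ consists of the first $n$ rows of the matrix of right singular vectors. Let $X\in\mathbb{R}^{n\times s}$ and suppose that for some $0<\epsilon<1$, $$\|V_1^TXX^TV_1-V_1^TV_1\|_2\le\epsilon .$$ Let $R\in\mathbb{R}^{m\times m}$ be any matrix with $R^TR=(AX)(AX)^T+\lambda I_m$. Then $$\kappa_2(R^{-T}D)\le\sqrt{\frac{1+\epsilon}{1-\epsilon}}.$$
   Context: $\|\cdot\|_2$ is the spectral norm; $\kappa_2(M)$ for the full-row-rank $m\times(n+m)$ matrix $M$ is the ratio of its largest to smallest of its $m$ singular values. $R$ is invertible since $R^TR$ is positive definite. *)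

From HB Require Import structures.
From mathcomp Require Import all_boot all_order all_algebra.
From mathcomp Require Import classical_sets reals.
Set Implicit Arguments. Unset Strict Implicit. Unset Printing Implicit Defensive.
Import Order.TTheory GRing.Theory Num.Theory.
Local Open Scope ring_scope.
Local Open Scope classical_set_scope.

(* Singular values of M : 'M_(p,q) taken as the square roots of the
   eigenvalues of M M^T (for p <= q and full row rank these are exactly the
   p singular values of M). *)
Definition singvals {R : realType} {p q : nat} (M : 'M[R]_(p, q)) : set R :=
  [set Num.sqrt a | a in [set a | eigenvalue (M *m M^T) a]].

Definition sigma_max {R : realType} {p q : nat} (M : 'M[R]_(p, q)) : R :=
  sup (singvals M).

Definition sigma_min {R : realType} {p q : nat} (M : 'M[R]_(p, q)) : R :=
  inf (singvals M).

Definition spec_norm {R : realType} {p q : nat} (M : 'M[R]_(p, q)) : R :=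
  sigma_max M.

Definition kappa2 {R : realType} {p q : nat} (M : 'M[R]_(p, q)) : R :=
  sigma_max M / sigma_min M.

From mathcomp Require Import all_boot all_order all_algebra.
From mathcomp Require Import classical_sets reals boolp polyrcf.
From mathcomp Require Import lra.
Import Order.TTheory GRing.Theory Num.Theory.
Local Open Scope ring_scope.
Local Open Scope classical_set_scope.

(* Writing D = K V^T with K = U Sigma invertible and V orthonormal gives
   D D^T = K K^T and R^T R = K (I + E) K^T, where E = V1^T X X^T V1 - V1^T V1
   (use V1^T V1 + V2^T V2 = I and sqrt(lambda) I = K V2^T).  Hence the Gram
   matrix of R^-T D, namely R^-T K K^T R^-1, has the same eigenvalues as
   K^T R^-1 R^-T K = (I + E)^-1, and these lie in [1/(1+eps), 1/(1-eps)]
   because the eigenvalues of the symmetric matrix E are bounded by its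
   spectral norm. *)

Section Eigenvalues.
Context {F : fieldType}.

Lemma unitmx_diagonal m (S : 'M[F]_m) :
  (forall i j : 'I_m, i != j -> S i j = 0) -> (forall i, S i i != 0) ->
  S \in unitmx.
Proof.
move=> Sdiag Snz; have -> : S = diag_mx (\row_i S i i).
  apply/matrixP => i j; rewrite !mxE; case: eqVneq => [->|ij].
    by rewrite mulr1n.
  by rewrite mulr0n Sdiag.
rewrite unitmxE det_diag unitfE; apply/prodf_neq0 => i _.
by rewrite mxE.
Qed.

Lemma eigenvalue_mulmxC {m} {A B : 'M[F]_m} {a} : A \in unitmx ->
  eigenvalue (A *m B) a -> eigenvalue (B *m A) a.
Proof.
move=> Au /eigenvalueP[v hv v0]; apply/eigenvalueP; exists (v *m A).
  by rewrite mulmxA -(mulmxA v) hv scalemxAl.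
by rewrite mulmx_free_eq0 // row_free_unit.
Qed.

Lemma eigenvalue_1_add {m} {E : 'M[F]_m} {b} :
  eigenvalue (1%:M + E) b -> eigenvalue E (b - 1).
Proof.
case/eigenvalueP => v hv v0; apply/eigenvalueP; exists v => //.
by rewrite scalerBl scale1r -hv mulmxDr mulmx1 addrC addKr.
Qed.

Lemma eigenvalue_inv {m} {N M : 'M[F]_m} {a} : N *m M = 1%:M ->
  eigenvalue N a -> a != 0 /\ eigenvalue M a^-1.
Proof.
move=> NM /eigenvalueP[v hv v0].
have hvM : v = a *: (v *m M) by rewrite scalemxAl -hv -mulmxA NM mulmx1.
have a0 : a != 0 by apply: contraNneq v0 => a0; rewrite hvM a0 scale0r.
split=> //; apply/eigenvalueP; exists v => //.
by rewrite {2}hvM scalerA mulVf // scale1r.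
Qed.

End Eigenvalues.

Section Spectrum.
Context {R : realType}.

Lemma singvals_has_ubound {p q} (M : 'M[R]_(p, q)) : has_ubound (singvals M).
Proof.
exists (Num.sqrt (cauchy_bound (char_poly (M *m M^T)))).
move=> _ [a Ha <-]; apply: ler_wsqrtr.
move: Ha; rewrite /= eigenvalue_root_char => /eqP Ha.
have := cauchy_boundP (monic_neq0 (char_poly_monic _)) Ha.
by move/ltW; apply: le_trans; apply: ler_norm.
Qed.

Lemma eigenvalue_norm_le_spec_norm {m} {E : 'M[R]_m} {b} :
  E^T = E -> eigenvalue E b -> `|b| <= spec_norm E.
Proof.
move=> ET /eigenvalueP[w hw w0].
suff Hb : singvals E `|b| by exact: (ub_le_sup (singvals_has_ubound E) Hb).
exists (b ^+ 2); last by rewrite sqrtr_sqr.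
apply/eigenvalueP; exists w => //.
by rewrite ET mulmxA hw -scalemxAl hw scalerA expr2.
Qed.

Lemma kappa2_le_sqrt {p q} (M : 'M[R]_(p, q)) (lo hi : R) : 0 < lo ->
  (forall a, eigenvalue (M *m M^T) a -> lo <= a <= hi) ->
  kappa2 M <= Num.sqrt (hi / lo).
Proof.
move=> lo0 hM; rewrite /kappa2 /sigma_max /sigma_min.
have hS x : singvals M x -> Num.sqrt lo <= x <= Num.sqrt hi.
  by case=> a /hM /andP[h1 h2] <-; rewrite !ler_wsqrtr.
have [[x Sx]|Se] := pselect (singvals M !=set0); last first.
  suff -> : singvals M = set0 by rewrite sup0 mul0r sqrtr_ge0.
  by apply/seteqP; split => x // Sx; apply: Se; exists x.
have Hsup : sup (singvals M) <= Num.sqrt hi.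
  by apply: ge_sup; [exists x | move=> y /hS /andP[]].
have Hinf : Num.sqrt lo <= inf (singvals M).
  by apply: lb_le_inf; [exists x | move=> y /hS /andP[]].
have slo0 : 0 < Num.sqrt lo by rewrite sqrtr_gt0.
have inf0 : 0 < inf (singvals M) by apply: lt_le_trans Hinf.
rewrite [hi / lo]mulrC sqrtrM ?invr_ge0 ?(ltW lo0) // sqrtrV ?(ltW lo0) //.
rewrite [_ * Num.sqrt hi]mulrC.
apply: le_trans (ler_wpM2r _ Hsup) _; first by rewrite invr_ge0 ltW.
by rewrite ler_wpM2l ?sqrtr_ge0 // lef_pV2 ?posrE.
Qed.

End Spectrum.

Section Perturbation.
Context {R : realType} {m : nat}.

Lemma unitmx_1_add (E : 'M[R]_m) :
  E^T = E -> spec_norm E < 1 -> 1%:M + E \in unitmx.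
Proof.
move=> E_sym E_lt1; rewrite -row_free_unit -kermx_eq0; apply: contraT => ker_nz.
have : eigenvalue (1%:M + E) 0 by rewrite /eigenvalue /eigenspace raddf0 subr0.
move/eigenvalue_1_add/(eigenvalue_norm_le_spec_norm E_sym).
by rewrite sub0r normrN normr1 leNgt E_lt1.
Qed.

Lemma eigenvalue_inv_1_add {E N : 'M[R]_m} {eps a} :
  E^T = E -> spec_norm E <= eps -> eps < 1 ->
  N *m (1%:M + E) = 1%:M -> eigenvalue N a ->
  (1 + eps)^-1 <= a <= (1 - eps)^-1.
Proof.
move=> E_sym E_le eps_lt1 NE /(eigenvalue_inv NE)[a0 /eigenvalue_1_add].
move/(eigenvalue_norm_le_spec_norm E_sym)/le_trans/(_ E_le).
rewrite ler_norml => /andP[lo hi].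
have ainv_gt0 : 0 < a^-1 by lra.
by rewrite -[a]invrK !lef_pV2 ?posrE; lra.
Qed.

End Perturbation.

Lemma precond_gram_eigenvalue {R : realType} {m p : nat}
    (K Rm E : 'M[R]_m) (M : 'M[R]_(m, p)) eps a :
  K \in unitmx -> E^T = E -> spec_norm E <= eps -> eps < 1 ->
  M *m M^T = K *m K^T -> Rm^T *m Rm = K *m (1%:M + E) *m K^T ->
  eigenvalue ((invmx Rm)^T *m M *m ((invmx Rm)^T *m M)^T) a ->
  (1 + eps)^-1 <= a <= (1 - eps)^-1.
Proof.
move=> Ku E_sym E_le eps_lt1 MMT RTR.
have KTu : K^T \in unitmx by rewrite unitmx_tr.
have Rmu : Rm \in unitmx.
  have : Rm^T *m Rm \in unitmx.
    rewrite RTR !unitmx_mul Ku KTu unitmx_1_add //.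
    exact: le_lt_trans E_le eps_lt1.
  by rewrite unitmx_mul => /andP[].
set A := (invmx Rm)^T *m K.
have Au : A \in unitmx by rewrite unitmx_mul unitmx_tr unitmx_inv Rmu.
have gram : (invmx Rm)^T *m M *m ((invmx Rm)^T *m M)^T = A *m A^T.
  by rewrite !trmx_mul trmxK -!mulmxA (mulmxA M) MMT !mulmxA.
have inv_1_add : A^T *m A *m (1%:M + E) = 1%:M.
  apply: (can_inj (mulmxK KTu)); rewrite /= mul1mx /A trmx_mul trmxK.
  rewrite -!mulmxA (mulmxA K) -RTR (mulmxA (invmx Rm)^T) -trmx_mul.
  by rewrite mulmxV // trmx1 mul1mx mulVmx // mulmx1.
move=> ev; apply: (eigenvalue_inv_1_add E_sym E_le eps_lt1 inv_1_add).
apply: (eigenvalue_mulmxC Au); move: ev.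
(* [gram] is stated over the ring instance of R, [eigenvalue] over its field
   instance; a plain [rewrite gram] only matches after unfolding. *)
by rewrite /eigenvalue /eigenspace gram.
Qed.

Theorem theorem3p4 (R : realType) (m n s : nat) (hmn : (m <= n)%N)
  (A : 'M[R]_(m, n)) (lambda : R) (hlam : 0 < lambda)
  (U Sigma : 'M[R]_m) (V1 : 'M[R]_(n, m)) (V2 : 'M[R]_m)
  (hU : U^T *m U = 1%:M)
  (hSdiag : forall i j : 'I_m, i != j -> Sigma i j = 0)
  (hSpos : forall i : 'I_m, 0 < Sigma i i)
  (hSord : forall i j : 'I_m, (i <= j)%N -> Sigma j j <= Sigma i i)
  (hV : (col_mx V1 V2)^T *m col_mx V1 V2 = 1%:M)
  (hSVD : row_mx A ((Num.sqrt lambda)%:M : 'M[R]_m)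
          = U *m Sigma *m (col_mx V1 V2)^T)
  (X : 'M[R]_(n, s)) (eps : R) (heps0 : 0 < eps) (heps1 : eps < 1)
  (hX : spec_norm (V1^T *m X *m X^T *m V1 - V1^T *m V1) <= eps)
  (Rm : 'M[R]_m)
  (hR : Rm^T *m Rm = (A *m X) *m (A *m X)^T + lambda%:M) :
  kappa2 ((invmx Rm)^T *m row_mx A ((Num.sqrt lambda)%:M : 'M[R]_m))
    <= Num.sqrt ((1 + eps) / (1 - eps)).
Proof.
set D := row_mx A _ in hSVD *; set K := U *m Sigma in hSVD.
set E := V1^T *m X *m X^T *m V1 - V1^T *m V1 in hX.
have [hA hL] : A = K *m V1^T /\ (Num.sqrt lambda)%:M = K *m V2^T.
  by move: hSVD; rewrite tr_col_mx mul_mx_row => /eq_row_mx.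
have V_orth : V1^T *m V1 + V2^T *m V2 = 1%:M.
  by rewrite -hV tr_col_mx mul_row_col.
have Ku : K \in unitmx.
  have [_ Uu] := mulmx1_unit hU.
  by rewrite unitmx_mul Uu unitmx_diagonal // => i; rewrite gt_eqF.
have DDT : D *m D^T = K *m K^T.
  by rewrite hSVD trmx_mul trmxK -!mulmxA (mulmxA _^T) hV mul1mx.
have E_sym : E^T = E by rewrite /E linearB /= !trmx_mul !trmxK !mulmxA.
have RTR : Rm^T *m Rm = K *m (1%:M + E) *m K^T.
  have hlamK : lambda%:M = K *m V2^T *m (K *m V2^T)^T.
    by rewrite -hL tr_scalar_mx -scalar_mxM -expr2 sqr_sqrtr // ltW.
  have -> : 1%:M + E = V1^T *m X *m X^T *m V1 + V2^T *m V2.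
    by rewrite -V_orth /E addrC addrA subrK.
  by rewrite hR hlamK hA mulmxDr mulmxDl !trmx_mul !trmxK !mulmxA.
rewrite [_ / (1 - eps)]mulrC -[1 + eps]invrK.
apply: kappa2_le_sqrt; first by rewrite invr_gt0; lra.
by move=> a; apply: precond_gram_eigenvalue Ku E_sym hX heps1 DDT RTR.
Qed.
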